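(* Let $(N,M,W,C,P,\overline{Q})$ be an MRS-situation and $(N,M,v)$ the corresponding MRS-game. Then $(N,M,v)$ is balanced, i.e. its core is nonempty.
   Context: An MRS-situation $(N,M,W,C,P,\overline{Q})$ consists of a finite set $N$ of retailers and a finite set $M$ of suppliers (distinct agents), and: for each $j\in M$ a unit production cost $c_j:[0,\infty)\to(0,\infty)$, decreasing and continuous with $c_j(q)q$ nondecreasing, and a wholesale price $w_j:[0,\infty)\to(0,\infty)$, nonincreasing and continuous, with $w_j(q)>c_j(q)$ for all $q\ge0$ and $w_j(q)q$ nondecreasing; for each $i\in N$ a selling price $p_i:[0,\infty)\to\mathbb{R}$, nonincreasing and continuous, with $p_i(0)>w_j(0)$ for all $j$, and $q_i^*>0$ with $p_i(q_i^* )=0$; and capacities $\overline{q}_{ij}\in(0,\infty)$. For an order matrix $q=(q_{ij})_{i\in R,j\in M}\ge0$: $q_{Rj}=\sum_{i\in R}q_{ij}$, $q_{iM}=\sum_{j}q_{ij}$, $q_{RS}=\sum_{j\in S}\sum_{i\in R}q_{ij}$, $q_i=(q_{ij})_j$, $q_R=(q_{Rj})_j$; $c_S(x)=\min_{j\in S}c_j(x)$. For $i\in R$: $\Pi_i(q_i,\Psi^S(q_R))=p_i(q_{iM})q_{iM}-\sum_{j\in S}c_S(q_{RS})q_{ij}-\sum_{j\in M\setminus S}w_j(q_{Rj})q_{ij}$. $\mathbb{Q}^R=\{q\in\mathbb{R}_+^{R\times M}: q_{iM}\le q_i^*,\ q_{ij}\le\overline{q}_{ij}\}$; $q^{(R,S)}$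 is an optimal solution of $\max\{\sum_{i\in R}\Pi_i(q_i,\Psi^S(q_R)):q\in\mathbb{Q}^R\}$. The MRS-game is the TU-game on player set $N\cup M$ with $v(R,S)=\sum_{i\in R}\Pi_i(q_i^{(R,S)},\Psi^S(q_R^{(R,S)}))$ for $\emptyset\ne R\subseteq N$, $S\subseteq M$ (value of coalition $R\cup S$), and $v(\emptyset,S)=0$. Its core is $\{x\in\mathbb{R}^{N\cup M}: \sum_{k\in N\cup M}x_k=v(N,M),\ \sum_{k\in R\cup S}x_k\ge v(R,S)\ \forall R\subseteq N, S\subseteq M\}$. *)

From HB Require Import structures.
From mathcomp Require Import all_boot all_order all_algebra.
From mathcomp Require Import all_classical all_reals all_analysis.
Set Implicit Arguments. Unset Strict Implicit. Unset Printing Implicit Defensive.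
Import Order.TTheory GRing.Theory Num.Theory numFieldNormedType.Exports.
Local Open Scope ring_scope.


Section MRS.
Variables (R : realType) (N M : finType).

Definition halfline : set R := [set x | 0 <= x]%classic.

Record mrs_data := MRSData {
  mc : M -> R -> R;      (* unit production cost c_j *)
  mw : M -> R -> R;      (* wholesale price w_j *)
  mp : N -> R -> R;      (* selling price p_i *)
  mqstar : N -> R;
  mqbar : N -> M -> R    (* capacities \overline{q}_{ij} *)
}.

Definition decreasing_on (f : R -> R) :=
  forall x y, 0 <= x -> x < y -> f y < f x.
Definition nonincreasing_on (f : R -> R) :=
  forall x y, 0 <= x -> x <= y -> f y <= f x.
Definition nondecreasing_on (f : R -> R) :=
  forall x y, 0 <= x -> x <= y -> f x <= f y.

Definition is_MRS_situation (D : mrs_data) : Prop :=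
  [/\ (forall j,
        [/\ (forall x, 0 <= x -> 0 < mc D j x),
            decreasing_on (mc D j),
            ({within halfline, continuous (mc D j)})%classic &
            nondecreasing_on (fun x => mc D j x * x)]),
      (forall j,
        [/\ (forall x, 0 <= x -> 0 < mw D j x),
            nonincreasing_on (mw D j),
            ({within halfline, continuous (mw D j)})%classic,
            (forall x, 0 <= x -> mc D j x < mw D j x) &
            nondecreasing_on (fun x => mw D j x * x)]),
      (forall i,
        [/\ nonincreasing_on (mp D i),
            ({within halfline, continuous (mp D i)})%classic,
            (forall j, mw D j 0 < mp D i 0),
            0 < mqstar D i &
            mp D i (mqstar D i) = 0]) &
      (forall i j, 0 < mqbar D i j)].

Definition qiM (q : N -> M -> R) (i : N) : R := \sum_(j : M) q i j.
Definition qRj (Rc : {set N}) (q : N -> M -> R) (j : M) : R :=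
  \sum_(i in Rc) q i j.
Definition qRS (Rc : {set N}) (S : {set M}) (q : N -> M -> R) : R :=
  \sum_(j in S) \sum_(i in Rc) q i j.

(* c_S(x) = min_{j in S} c_j(x)  (irrelevant, set to 0, when S is empty) *)
Definition cS (D : mrs_data) (S : {set M}) (x : R) : R :=
  if [pick j in S] is Some j0 then \big[Num.min/mc D j0 x]_(j in S) mc D j x
  else 0.

Definition profit (D : mrs_data) (Rc : {set N}) (S : {set M})
  (q : N -> M -> R) (i : N) : R :=
  mp D i (qiM q i) * qiM q i
  - \sum_(j in S) cS D S (qRS Rc S q) * q i j
  - \sum_(j in ~: S) mw D j (qRj Rc q j) * q i j.

Definition total_profit (D : mrs_data) (Rc : {set N}) (S : {set M})
  (q : N -> M -> R) : R :=
  \sum_(i in Rc) profit D Rc S q i.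

(* q in Q^R (only the rows i in R matter) *)
Definition feasible (D : mrs_data) (Rc : {set N}) (q : N -> M -> R) : Prop :=
  forall i, i \in Rc ->
    qiM q i <= mqstar D i /\
    (forall j, 0 <= q i j /\ q i j <= mqbar D i j).

Definition optimal (D : mrs_data) (Rc : {set N}) (S : {set M})
  (q : N -> M -> R) : Prop :=
  feasible D Rc q /\
  forall q', feasible D Rc q' -> total_profit D Rc S q' <= total_profit D Rc S q.

(* The MRS-game, built from a choice q^{(R,S)} of optimal solutions *)
Definition mrs_game (D : mrs_data)
  (qopt : {set N} -> {set M} -> N -> M -> R) (Rc : {set N}) (S : {set M}) : R :=
  if Rc == finset.set0 then 0 else total_profit D Rc S (qopt Rc S).

(* core of a TU-game on N ∪ M, coalitions R ∪ S, allocation (x, y) *)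
Definition in_core (v : {set N} -> {set M} -> R) (x : N -> R) (y : M -> R)
  : Prop :=
  \sum_(i : N) x i + \sum_(j : M) y j = v finset.setT finset.setT /\
  forall (Rc : {set N}) (S : {set M}),
    v Rc S <= \sum_(i in Rc) x i + \sum_(j in S) y j.

End MRS.

From HB Require Import structures.
From mathcomp Require Import all_boot all_order all_algebra.
From mathcomp Require Import all_classical all_reals all_analysis.
Import Order.TTheory GRing.Theory Num.Theory numFieldNormedType.Exports.
Local Open Scope ring_scope.

(* Pay the suppliers nothing and retailer i the amount g_i(p): its best profit
   (p_i(t) - p) t when buying at unit price p the quantity t it sells in some
   plan q^(R,M) with i in R, or 0.  Each g_i is continuous in p, and the sum of
   the g_i is at least v(N,M) at p = 0 and at most 0 once p exceeds every
   p_i(0), so for some p the allocation is efficient.  It is stable: more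
   suppliers only lower the unit costs, so v(R,S) <= v(R,M).  If
   p <= c_M(q_RM), each term of v(R,M) is at most the corresponding g_i(p).
   Otherwise the plans of the outsiders realizing their g_i(p) can be merged
   with q^(R,M) into a plan for N u M; as c_M is nonincreasing its value is at
   least v(R,M) + sum_(i notin R) g_i(p), and comparing with
   v(N,M) = sum_i g_i(p) gives v(R,M) <= sum_(i in R) g_i(p). *)

Set Implicit Arguments. Unset Strict Implicit. Unset Printing Implicit Defensive.

Lemma continuous_big (T U : topologicalType) (I : Type) (op : U -> U -> U)
    (idx : U) (s : seq I) (P : pred I) (F : I -> T -> U) :
  (forall f g : T -> U, continuous f -> continuous g ->
     continuous (fun x => op (f x) (g x))) ->
  (forall i, continuous (F i)) ->
  continuous (fun x => \big[op/idx]_(i <- s | P i) F i x).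
Proof.
move=> opC FC; elim: s => [|a s IHs].
  by under eq_fun do rewrite big_nil; apply: cst_continuous.
under eq_fun do rewrite big_cons.
by case: (P a) => //; apply: opC.
Qed.

Lemma sum_setT (V : nmodType) (I : finType) (F : I -> V) :
  \sum_(i in [set: I]) F i = \sum_i F i.
Proof. by apply: eq_bigl => i; rewrite inE. Qed.

Lemma sum_setC_split (V : nmodType) (I : finType) (A : {set I}) (F : I -> V) :
  \sum_i F i = \sum_(i in A) F i + \sum_(i in ~: A) F i.
Proof. by rewrite -sum_setT (big_setID A) finset.setTI finset.setTD. Qed.

Lemma decreasing_on_nonincreasing (R : realType) (f : R -> R) :
  decreasing_on f -> nonincreasing_on f.
Proof.
move=> f_decr x y x0; rewrite le_eqVlt => /predU1P [-> //|xy].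
exact/ltW/f_decr.
Qed.

Section Situation.
Variables (R : realType) (N M : finType) (D : mrs_data R N M).
Hypothesis HD : is_MRS_situation D.
Implicit Types (Rc : {set N}) (S : {set M}) (q : N -> M -> R) (x : R).

Lemma mc_gt0 j x : 0 <= x -> 0 < mc D j x.
Proof. by case: HD => /(_ j) [] + _ _ _ _ _ _ => /(_ x). Qed.

Lemma mc_noninc j : nonincreasing_on (mc D j).
Proof. by case: HD => /(_ j) [] _ /decreasing_on_nonincreasing. Qed.

Lemma mc_lt_mw j x : 0 <= x -> mc D j x < mw D j x.
Proof. by case: HD => _ /(_ j) [] _ _ _ /(_ x). Qed.

Lemma mp_noninc i : nonincreasing_on (mp D i).
Proof. by case: HD => _ _ /(_ i) []. Qed.

Lemma cS_le_mc S j x : j \in S -> cS D S x <= mc D j x.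
Proof.
move=> jS; rewrite /cS; case: pickP => [j0 _|/(_ j)]; last by rewrite jS.
by rewrite (bigD1 j) //= ge_min lexx.
Qed.

Lemma cS_ge S a x : S != finset.set0 ->
  (forall j, j \in S -> a <= mc D j x) -> a <= cS D S x.
Proof.
move=> /set0Pn [j1 j1S] a_le; rewrite /cS; case: pickP => [j0 j0S|/(_ j1)].
  apply: (big_ind (fun y => a <= y)) => [|y z ay az|j jS]; last exact: a_le.
  - exact: a_le.
  - by rewrite le_min ay az.
by rewrite j1S.
Qed.

Lemma cS_set0 x : cS D finset.set0 x = 0.
Proof. by rewrite /cS; case: pickP => [? /[!inE]|]. Qed.

Lemma cS_ge0 S x : 0 <= x -> 0 <= cS D S x.
Proof.
move=> x0; have [->|S0] := eqVneq S finset.set0; first by rewrite cS_set0.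
by apply: cS_ge => // j _; apply/ltW/mc_gt0.
Qed.

Lemma cS_noninc S : nonincreasing_on (cS D S).
Proof.
move=> x y x0 xy; have [->|S0] := eqVneq S finset.set0; first by rewrite !cS_set0.
apply: cS_ge => // j jS; apply: le_trans (cS_le_mc _ jS) _.
exact: mc_noninc.
Qed.

Lemma cS_subset S S' x : S \subset S' -> S != finset.set0 -> cS D S' x <= cS D S x.
Proof.
move=> sSS' S0; apply: cS_ge => // j jS; apply: cS_le_mc.
exact: (fintype.subsetP sSS').
Qed.

Definition feasible_row i (w : M -> R) : Prop :=
  \sum_j w j <= mqstar D i /\ (forall j, 0 <= w j /\ w j <= mqbar D i j).

Lemma feasible_row0 i : feasible_row i (fun=> 0).
Proof.
case: HD => _ _ /(_ i) [_ _ _ /ltW qstar0 _] /(_ i) qbar0.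
by split=> [|j]; rewrite ?big1 // lexx; split=> //; apply/ltW.
Qed.

Lemma feasible_ge0 Rc q i j : feasible D Rc q -> i \in Rc -> 0 <= q i j.
Proof. by move=> q_feas /q_feas [_ /(_ j) []]. Qed.

Lemma qiM_ge0 Rc q i : feasible D Rc q -> i \in Rc -> 0 <= qiM q i.
Proof. by move=> q_feas iRc; apply: sumr_ge0 => j _; apply: feasible_ge0 q_feas iRc. Qed.

Lemma qRj_ge0 Rc q j : feasible D Rc q -> 0 <= qRj Rc q j.
Proof. by move=> q_feas; apply: sumr_ge0 => i iRc; apply: feasible_ge0 q_feas iRc. Qed.

Lemma sum_qiM Rc q : \sum_(i in Rc) qiM q i = \sum_j qRj Rc q j.
Proof. exact: exchange_big. Qed.

Lemma qRS_setT Rc q : qRS Rc [set: M] q = \sum_(i in Rc) qiM q i.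
Proof. by rewrite sum_qiM /qRS sum_setT. Qed.

Lemma profit_setT Rc q i :
  profit D Rc [set: M] q i =
  (mp D i (qiM q i) - cS D [set: M] (\sum_(k in Rc) qiM q k)) * qiM q i.
Proof.
by rewrite /profit qRS_setT finset.setCT big_set0 subr0 -mulr_sumr sum_setT mulrBl.
Qed.

Lemma profit_le_setT Rc S q i : feasible D Rc q -> i \in Rc ->
  profit D Rc S q i <= profit D Rc [set: M] q i.
Proof.
move=> q_feas iRc; set QT := \sum_(k in Rc) qiM q k.
have qRj0 j : 0 <= qRj Rc q j by apply: qRj_ge0 j q_feas.
have qRj_le j : qRj Rc q j <= QT.
  by rewrite /QT sum_qiM (bigD1 j) //= lerDl; apply: sumr_ge0.
have qRS_le : qRS Rc S q <= QT.
  by rewrite /QT sum_qiM (sum_setC_split S) lerDl; apply: sumr_ge0.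
have cT_le_cS j : j \in S -> cS D [set: M] QT <= cS D S (qRS Rc S q).
  move=> jS; apply: le_trans (cS_subset QT (finset.subsetT S) _) _.
    by apply/set0Pn; exists j.
  by apply: (cS_noninc S _ qRS_le); apply: sumr_ge0 => k _; apply: qRj0.
have cT_le_mw j : cS D [set: M] QT <= mw D j (qRj Rc q j).
  apply: le_trans (cS_le_mc QT (finset.in_setT j)) _.
  exact: le_trans (mc_noninc j (qRj0 j) (qRj_le j)) (ltW (mc_lt_mw j (qRj0 j))).
rewrite profit_setT /profit mulrBl -addrA lerD2l -opprD lerN2.
rewrite mulr_sumr (sum_setC_split S).
apply: lerD; apply: ler_sum => j jS; apply: ler_wpM2r.
- exact: feasible_ge0 j q_feas iRc.
- exact: cT_le_cS jS.
- exact: feasible_ge0 j q_feas iRc.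
- exact: cT_le_mw.
Qed.

Section Game.
Variable qopt : {set N} -> {set M} -> N -> M -> R.
Hypothesis Hopt : forall Rc S, Rc != finset.set0 -> optimal D Rc S (qopt Rc S).

Local Notation v := (mrs_game D qopt).

Lemma game_set0 S : v finset.set0 S = 0.
Proof. by rewrite /mrs_game eqxx. Qed.

Lemma gameE Rc S : Rc != finset.set0 -> v Rc S = total_profit D Rc S (qopt Rc S).
Proof. by rewrite /mrs_game => /negbTE ->. Qed.

Lemma game_le_setT Rc S : v Rc S <= v Rc [set: M].
Proof.
have [->|Rc0] := eqVneq Rc finset.set0; first by rewrite !game_set0.
have [qS_feas _] := Hopt S Rc0; have [_ qT_max] := Hopt [set: M] Rc0.
rewrite !gameE //; apply: le_trans (qT_max _ qS_feas).
by apply: ler_sum => i iRc; apply: profit_le_setT qS_feas iRc.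
Qed.

Definition sales Rc i : R := qiM (qopt Rc [set: M]) i.

Definition gain i p : R :=
  \big[Num.max/0]_(Rc : {set N} | i \in Rc) ((mp D i (sales Rc i) - p) * sales Rc i).

Lemma sales_ge0 Rc i : i \in Rc -> 0 <= sales Rc i.
Proof.
move=> iRc; have Rc0 : Rc != finset.set0 by apply/set0Pn; exists i.
exact: qiM_ge0 (Hopt [set: M] Rc0).1 iRc.
Qed.

Lemma gain_ge0 i p : 0 <= gain i p.
Proof. exact: bigmax_ge_id. Qed.

Lemma gain_ge Rc i p : i \in Rc -> (mp D i (sales Rc i) - p) * sales Rc i <= gain i p.
Proof. by move=> iRc; apply: (le_bigmax_cond _ (fun Rc => _)). Qed.

Lemma gain_le0 i p : mp D i 0 <= p -> gain i p <= 0.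
Proof.
move=> mp0_le; apply: (big_ind (fun y => y <= 0)) => // [y z y0 z0|Rc iRc].
  by rewrite ge_max y0 z0.
apply: mulr_le0_ge0; last exact: sales_ge0.
by rewrite subr_le0 (le_trans _ mp0_le) // mp_noninc // sales_ge0.
Qed.

Lemma gain_attained i p :
  exists w, feasible_row i w /\ gain i p = (mp D i (\sum_j w j) - p) * \sum_j w j.
Proof.
apply: (big_ind (fun y => exists w, feasible_row i w /\
                   y = (mp D i (\sum_j w j) - p) * \sum_j w j)).
- by exists (fun=> 0); rewrite big1 // mulr0; split=> //; apply: feasible_row0.
- move=> y z [w1 [w1_feas ->]] [w2 [w2_feas ->]].
  by case: leP => _; [exists w2 | exists w1].
- move=> Rc iRc; exists (qopt Rc [set: M] i); split=> //.
  have Rc0 : Rc != finset.set0 by apply/set0Pn; exists i.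
  exact: (Hopt [set: M] Rc0).1.
Qed.

Lemma continuous_gain i : continuous (gain i).
Proof.
apply: continuous_big => [f g fC gC x|Rc x]; first exact: max_fun_continuous.
apply: (@continuousM _ _ (fun p => mp D i (sales Rc i) - p) (fun=> _)).
  by apply: continuousB; [apply: cst_continuous | apply: cvg_id].
exact: cst_continuous.
Qed.

Lemma game_le_sum_gain_low_price Rc p :
  p <= cS D [set: M] (\sum_(k in Rc) sales Rc k) ->
  v Rc [set: M] <= \sum_(i in Rc) gain i p.
Proof.
move=> p_le; have [->|Rc0] := eqVneq Rc finset.set0; first by rewrite game_set0 big_set0.
rewrite gameE // /total_profit; apply: ler_sum => i iRc.
apply: le_trans (gain_ge p iRc); rewrite profit_setT.
by apply: ler_wpM2r; [apply: sales_ge0 | rewrite lerD2l lerN2].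
Qed.

Lemma game_setT_ge0 : 0 <= v [set: N] [set: M].
Proof.
have [->|N0] := eqVneq [set: N] finset.set0; first by rewrite game_set0.
rewrite gameE //; apply: le_trans ((Hopt [set: M] N0).2 (fun _ _ => 0) _).
  by rewrite /total_profit big1 // => i _; rewrite profit_setT /qiM big1 ?mulr0.
by move=> i _; apply: feasible_row0.
Qed.

Lemma exists_clearing_price : exists p, \sum_i gain i p = v [set: N] [set: M].
Proof.
pose G p := \sum_i gain i p.
pose B := \sum_i `|mp D i 0|.
have B0 : 0 <= B by apply: sumr_ge0.
have v_le_G0 : v [set: N] [set: M] <= G 0.
  rewrite /G -sum_setT; apply: game_le_sum_gain_low_price; apply: cS_ge0.
  by apply: sumr_ge0 => i _; apply: sales_ge0; rewrite inE.
have GB_le_v : G B <= v [set: N] [set: M].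
  apply: le_trans game_setT_ge0; apply: sumr_le0 => i _; apply: gain_le0.
  by rewrite (le_trans (ler_norm _)) // /B (bigD1 i) //= lerDl sumr_ge0.
have G_cont : {within `[0, B], continuous G}%classic.
  apply: continuous_subspaceT; apply: continuous_big => [f g fC gC x|i].
    exact: continuousD (fC x) (gC x).
  exact: continuous_gain.
have [|p _ Gp] := @IVT R G 0 B (v [set: N] [set: M]) B0 G_cont.
  by rewrite ge_min le_max GB_le_v v_le_G0 !orbT.
by exists p.
Qed.

Lemma game_setT_ge_extension Rc p :
  Rc != finset.set0 -> cS D [set: M] (\sum_(k in Rc) sales Rc k) < p ->
  v Rc [set: M] + \sum_(i in ~: Rc) gain i p <= v [set: N] [set: M].
Proof.
move=> Rc0 cT_lt_p; set T := \sum_(k in Rc) sales Rc k.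
have [q_feas _] := Hopt [set: M] Rc0; set q := qopt Rc [set: M] in q_feas *.
have [w w_opt] := choice (fun i => gain_attained i p).
pose Q i := if i \in Rc then q i else w i.
have qiM_Q i : qiM Q i = if i \in Rc then qiM q i else \sum_j w i j.
  by rewrite /qiM /Q; case: ifP.
have Q_feas : feasible D [set: N] Q.
  move=> i _; suff : feasible_row i (Q i) by [].
  by rewrite /Q; case: ifP => [/q_feas|_] //; case: (w_opt i).
set X := \sum_(k in [set: N]) qiM Q k.
have T_le_X : T <= X.
  rewrite /X sum_setT (sum_setC_split Rc).
  have -> : \sum_(k in Rc) qiM Q k = T by apply: eq_bigr => k kRc; rewrite qiM_Q kRc.
  by rewrite lerDl; apply: sumr_ge0 => k _; apply: qiM_ge0 Q_feas _; rewrite inE.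
have cX_le_cT : cS D [set: M] X <= cS D [set: M] T.
  by apply: cS_noninc T_le_X; apply: sumr_ge0 => k kRc; apply: sales_ge0.
have N0 : [set: N] != finset.set0 by case/set0Pn: Rc0 => i _; apply/set0Pn; exists i.
rewrite !gameE //; apply: le_trans ((Hopt [set: M] N0).2 _ Q_feas).
rewrite [X in _ <= X]/total_profit sum_setT (sum_setC_split Rc).
apply: lerD; apply: ler_sum => i; rewrite ?inE !profit_setT qiM_Q => iRc.
- rewrite iRc; apply: ler_wpM2r; first exact: qiM_ge0 q_feas iRc.
  by rewrite lerD2l lerN2.
- rewrite (negbTE iRc); have [[_ w_ge0] ->] := w_opt i.
  apply: ler_wpM2r; first by apply: sumr_ge0 => j _; case: (w_ge0 j).
  by rewrite lerD2l lerN2 (le_trans cX_le_cT (ltW cT_lt_p)).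
Qed.

Lemma game_setT_le_sum_gain Rc p : \sum_i gain i p = v [set: N] [set: M] ->
  v Rc [set: M] <= \sum_(i in Rc) gain i p.
Proof.
move=> clearing; have [->|Rc0] := eqVneq Rc finset.set0.
  by rewrite game_set0 big_set0.
have [|cT_lt_p] := leP p (cS D [set: M] (\sum_(k in Rc) sales Rc k)).
  exact: game_le_sum_gain_low_price.
have := game_setT_ge_extension Rc0 cT_lt_p.
by rewrite -clearing (sum_setC_split Rc) lerD2r.
Qed.

End Game.

End Situation.

Unset Implicit Arguments. Set Strict Implicit.

Theorem theorem1 (R : realType) (N M : finType) (D : mrs_data R N M)
  (qopt : {set N} -> {set M} -> N -> M -> R) :
  is_MRS_situation D ->
  (forall (Rc : {set N}) (S : {set M}), Rc != finset.set0 -> optimal D Rc S (qopt Rc S)) ->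
  exists (x : N -> R) (y : M -> R), in_core (mrs_game D qopt) x y.
Proof.
move=> HD Hopt; have [p clearing] := exists_clearing_price HD Hopt.
exists (gain D qopt ^~ p), (fun=> 0); split=> [|Rc S]; rewrite big1_eq addr0 //.
exact: le_trans (game_le_setT HD Hopt Rc S) (game_setT_le_sum_gain HD Hopt Rc clearing).
Qed.
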